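(* Let $k\ge m_k\ge 1$ be integers, let $(x^{(k-m_k)},\dots,x^{(k)})$ be vectors in $U\cap\Sigma\setminus\{x_*\}$, let $t>0$, and set $r^{(k-m_k+i)}=f(x^{(k-m_k+i)})$ for $i=0,\dots,m_k$. Assume $$\forall i\in\{1,\dots,m_k\},\quad d^{(k)}_i\ \ge\ t\max_{j\in\{i,\dots,m_k\}}\|r^{(k-m_k+j)}\|_2 .$$ Then $r^{(k-m_k)},\dots,r^{(k)}$ are affinely independent (so $m_k\le p$), there is a unique $\tilde c\in\mathbb{R}^{m_k+1}$ with $\sum_{i=0}^{m_k}\tilde c_i=1$ and $\|\sum_{i=0}^{m_k}\tilde c_i r^{(k-m_k+i)}\|_2=\mathrm{dist}_2(0,\mathcal{A}^{(k)}_{m_k})$, and there is a constant $C_{m_k}>0$ depending only on $m_k$ such that $$\|\tilde c\|_\infty\le C_{m_k}(1+t^{-m_k}).$$ Assume moreover that $\tilde x^{(k+1)}=\sum_{i=0}^{m_k}\tilde c_i x^{(k-m_k+i)}$, $g(\tilde x^{(k+1)})$ and $\sum_{i=0}^{m_k}\tilde c_i g(x^{(k-m_k+i)})$ all belong to $U$, and define $x^{(k+1)}=g(\tilde x^{(k+1)})$ (version P, with $\Sigma$ arbitrary) or $x^{(k+1)}=\sum_{i=0}^{m_k}\tilde c_i g(x^{(k-m_k+i)})$ (version A, in the case $\Sigma=\mathbb{R}^n$), $r^{(k+1)}=f(x^{(k+1)})$ and $d^{(k)}_{m_k+1}=\mathrm{dist}_2(r^{(k+1)},\mathcal{A}^{(k)}_{m_k})$.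 Then there is a constant $\kappa>0$ (depending only on $f,g,x_*,\Sigma,U,K,\sigma,p$, not on $t$, $k$ or the vectors) such that $$\|r^{(k+1)}\|_2\le K\,\mathrm{dist}_2(0,\mathcal{A}^{(k)}_{m_k})+\kappa(1+t^{-2m_k})\max_{0\le i\le m_k}\|r^{(k-m_k+i)}\|_2^2$$ and $$(1-K)\|r^{(k+1)}\|_2\le K\,d^{(k)}_{m_k+1}+\kappa(1+t^{-2m_k})\max_{0\le i\le m_k}\|r^{(k-m_k+i)}\|_2^2 .$$
   Context: All norms $\|\cdot\|_2$ are Euclidean (Frobenius for operators where relevant). Let $n,p\ge1$ be integers, $\Sigma$ a smooth submanifold of $\mathbb{R}^n$, $V\subset\mathbb{R}^n$ open, $f\in\mathscr{C}^2(V,\mathbb{R}^p)$, $g\in\mathscr{C}^2(V,\Sigma)$ (i.e. $g$ is $\mathscr C^2$ on $V$ with values in $\Sigma$), and $x_*\in V\cap\Sigma$ with $g(x_* )=x_*$, $f(x_* )=0$. Assumption 1: there is $K\in(0,1)$ with $\|f(g(x))\|_2\le K\|f(x)\|_2$ for all $x\in V\cap g^{-1}(V)\cap\Sigma$. Assumption 2: there is $\sigma>0$ with $\sigma\|x-x_*\|_2\le\|f(x)\|_2$ for all $x\in V\cap\Sigma$. Both assumptions are in force. $U\subset V\cap g^{-1}(V)$ is a fixed open neighbourhood of $x_*$ such that: (i) for all $x,y\in U$, $\|f(x)-f(y)\|_2\le 2\|\mathrm{D}f(x_* )\|_2\|x-y\|_2$ and $\|f(g(x))-f(g(y))\|_2\le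 2\|\mathrm{D}f(x_* )\circ \mathrm{D}g(x_* )\|_2\|x-y\|_2$; (ii) there are $L,L'>0$ with $\|f(x)-\mathrm{D}f(x_* )(x-x_* )\|_2\le\frac L2\|x-x_*\|_2^2$ and $\|g(x)-x_*-\mathrm{D}g(x_* )(x-x_* )\|_2\le\frac{L'}2\|x-x_*\|_2^2$ for $x\in U$; (iii) $U$ is a tubular neighbourhood of $\Sigma\cap U$ on which the nearest-point projection $P_\Sigma(x)=\arg\min_{y\in\Sigma}\|x-y\|_2$ is well defined and smooth with values in $\Sigma\cap U$, and, with $P_{T_{x_*}\Sigma}$ the orthogonal projector onto the tangent space $T_{x_*}\Sigma$, there is $M>0$ with $\|P_\Sigma(x)-(x_*+P_{T_{x_*}\Sigma}(x-x_* ))\|_2\le\frac M2\|x-x_*\|_2^2$ for all $x\in U$. Notation: for $\ell\in\{0,\dots,m_k\}$, $\mathcal{A}^{(k)}_\ell=\{\sum_{i=0}^{\ell}c_i r^{(k-m_k+i)}:\sum_{i=0}^\ell c_i=1\}$ is the affine span of $r^{(k-m_k)},\dots,r^{(k-m_k+\ell)}$, and for $\ell\in\{1,\dots,m_k\}$, $d^{(k)}_\ell=\mathrm{dist}_2(r^{(k-m_k+\ell)},\mathcal{A}^{(k)}_{\ell-1})$. *)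

From Stdlib Require Import Reals ClassicalEpsilon.
From mathcomp Require Import all_boot.
Set Implicit Arguments. Unset Strict Implicit. Unset Printing Implicit Defensive.
Open Scope R_scope.

Definition Vec (n : nat) := 'I_n -> R.
Definition vzero {n} : Vec n := fun _ => 0.
Definition vadd {n} (u v : Vec n) : Vec n := fun i => u i + v i.
Definition vsub {n} (u v : Vec n) : Vec n := fun i => u i - v i.
Definition vscale {n} (a : R) (u : Vec n) : Vec n := fun i => a * u i.
Definition basis {n} (i : 'I_n) : Vec n := fun j => if j == i then 1 else 0.

Definition norm2 {n} (v : Vec n) : R := sqrt (\big[Rplus/0]_(i < n) (v i * v i)).

(** Matrices ('I_p -> 'I_n -> R represents a linear map R^n -> R^p) *)
Definition Mat (p n : nat) := 'I_p -> 'I_n -> R.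
Definition mapply {p n} (A : Mat p n) (v : Vec n) : Vec p :=
  fun i => \big[Rplus/0]_(j < n) (A i j * v j).
Definition mmul {p n q} (A : Mat p n) (B : Mat n q) : Mat p q :=
  fun i l => \big[Rplus/0]_(j < n) (A i j * B j l).
Definition frob {p n} (A : Mat p n) : R :=
  sqrt (\big[Rplus/0]_(i < p) \big[Rplus/0]_(j < n) (A i j * A i j)).

Definition lincomb {q} (m k : nat) (c : 'I_m.+1 -> R) (v : nat -> Vec q) : Vec q :=
  fun j => \big[Rplus/0]_(i < m.+1) (c i * v (k - m + i)%nat j).

Definition affspan {q} (v : nat -> Vec q) (k m l : nat) : Vec q -> Prop :=
  fun y => exists c : nat -> R,
    \big[Rplus/0]_(0 <= i < l.+1) c i = 1 /\
    y = (fun j => \big[Rplus/0]_(0 <= i < l.+1) (c i * v (k - m + i)%nat j)).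

Definition aff_indep {q} (v : nat -> Vec q) (k m : nat) : Prop :=
  forall c : 'I_m.+1 -> R,
    \big[Rplus/0]_(i < m.+1) c i = 0 ->
    lincomb k c v = vzero ->
    forall i, c i = 0.

Definition is_inf (E : R -> Prop) (d : R) : Prop :=
  (forall a, E a -> d <= a) /\ (forall d', (forall a, E a -> d' <= a) -> d' <= d).
Definition dist2 {q} (y : Vec q) (S : Vec q -> Prop) : R :=
  epsilon (inhabits 0) (is_inf (fun a => exists z, S z /\ a = norm2 (vsub y z))).

Definition is_open {n} (W : Vec n -> Prop) : Prop :=
  forall x, W x -> exists e, 0 < e /\ forall y, norm2 (vsub y x) < e -> W y.
Definition continuous_on {n} (W : Vec n -> Prop) (h : Vec n -> R) : Prop :=
  forall x, W x -> forall e, 0 < e -> exists d, 0 < d /\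
    forall y, W y -> norm2 (vsub y x) < d -> Rabs (h y - h x) < e.

Definition partial_lim {n} (h : Vec n -> R) (i : 'I_n) (x : Vec n) (l : R) : Prop :=
  derivable_pt_lim (fun s => h (vadd x (vscale s (basis i)))) 0 l.
Definition partial {n} (h : Vec n -> R) (i : 'I_n) (x : Vec n) : R :=
  epsilon (inhabits 0) (partial_lim h i x).

Fixpoint Ck (k : nat) {n} (W : Vec n -> Prop) (h : Vec n -> R) {struct k} : Prop :=
  continuous_on W h /\
  match k with
  | O => True
  | S k' => forall i, (forall x, W x -> exists l, partial_lim h i x l) /\
                      Ck k' W (partial h i)
  end.
Definition CkV (k : nat) {n p} (W : Vec n -> Prop) (F : Vec n -> Vec p) : Prop :=
  forall j, Ck k W (fun x => F x j).
Definition smooth_on {n p} (W : Vec n -> Prop) (F : Vec n -> Vec p) : Prop :=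
  forall k, CkV k W F.

Definition jac {n p} (F : Vec n -> Vec p) (x : Vec n) : Mat p n :=
  fun j i => partial (fun y => F y j) i x.

(** Smooth (embedded) submanifold of R^n: locally the zero set of a smooth
    submersion. *)
Definition submanifold {n} (S : Vec n -> Prop) : Prop :=
  forall y, S y -> exists (W : Vec n -> Prop) (q : nat) (phi : Vec n -> Vec q),
    is_open W /\ W y /\ smooth_on W phi /\
    (forall z, W z -> (S z <-> forall j, phi z j = 0)) /\
    (forall z, W z -> S z -> forall w : Vec q, exists v : Vec n, mapply (jac phi z) v = w).

Definition tangent {n} (S : Vec n -> Prop) (x : Vec n) (v : Vec n) : Prop :=
  exists (gam : R -> Vec n) (e : R), 0 < e /\
    (forall s, Rabs s < e -> S (gam s)) /\ gam 0 = x /\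
    forall i, derivable_pt_lim (fun s => gam s i) 0 (v i).

Definition orth_projector_onto {n} (P : Mat n n) (T : Vec n -> Prop) : Prop :=
  (forall i j, P i j = P j i) /\ mmul P P = P /\
  forall v, T v <-> exists w, mapply P w = v.

Definition nearest {n} (S : Vec n -> Prop) (x y : Vec n) : Prop :=
  S y /\ forall z, S z -> norm2 (vsub x y) <= norm2 (vsub x z).
Definition proj_set {n} (S : Vec n -> Prop) (x : Vec n) : Vec n :=
  epsilon (inhabits x) (nearest S x).

From Stdlib Require Import Reals ClassicalEpsilon FunctionalExtensionality Lra.
From HB Require Import structures.
From mathcomp Require Import all_boot.
Set Implicit Arguments. Unset Strict Implicit.
Open Scope R_scope.

(* Write s_i = r^(k-m+i).  The nearest point of the affine span of s_0, ..., s_l to a vector q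
   is computed by affine Gram-Schmidt along the residuals e_l = s_(l+1) - P_l s_(l+1), whose
   norms are the distances d_(l+1).  The separation hypothesis d_i >= t max_(j >= i) |s_j|
   bounds each update coefficient by 1 + 2/t; hence the e_l are nonzero and pairwise
   orthogonal (affine independence, m <= p) and the coefficients of the minimal-norm point are
   at most 2 * 4^m (1 + t^-m).  For the step, sharpness sigma |x - x_*| <= |f x| keeps the
   iterates within max |s_i| / sigma of x_*, so the second-order expansions of f, g and of the
   projection onto Sigma at x_* commute with affine combinations up to a quadratic error, and
   the contraction K applies at the projection of the combination onto Sigma. *)

Lemma Rplus_associative : associative Rplus. Proof. by move=> *; rewrite Rplus_assoc. Qed.
HB.instance Definition _ :=
  Monoid.isComLaw.Build R 0 Rplus Rplus_associative Rplus_comm Rplus_0_l.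
Lemma Rmult_associative : associative Rmult. Proof. by move=> *; rewrite Rmult_assoc. Qed.
HB.instance Definition _ :=
  Monoid.isComLaw.Build R 1 Rmult Rmult_associative Rmult_comm Rmult_1_l.
HB.instance Definition _ := Monoid.isMulLaw.Build R 0 Rmult Rmult_0_l Rmult_0_r.
HB.instance Definition _ :=
  Monoid.isAddLaw.Build R Rmult Rplus Rmult_plus_distr_r Rmult_plus_distr_l.

Ltac vext := apply: functional_extensionality => ?; cbv [vadd vsub vscale vzero]; ring.

Lemma big_ge0 (I : Type) (r : seq I) (P : pred I) (F : I -> R) :
  (forall i, P i -> 0 <= F i) -> 0 <= \big[Rplus/0]_(i <- r | P i) F i.
Proof. by move=> H; apply: (big_ind (fun x => 0 <= x)) => //; [lra | move=> *; lra]. Qed.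

Lemma big_Rle (I : Type) (r : seq I) (P : pred I) (F G : I -> R) :
  (forall i, P i -> F i <= G i) ->
  \big[Rplus/0]_(i <- r | P i) F i <= \big[Rplus/0]_(i <- r | P i) G i.
Proof.
move=> H; apply: (big_ind2 (fun x y => x <= y)) => //; first lra.
by move=> *; apply: Rplus_le_compat.
Qed.

Lemma sum_ord_1 n : \big[Rplus/0]_(i < n) 1 = INR n.
Proof. by elim: n => [|n IH]; rewrite ?big_ord0 // big_ord_recr IH S_INR. Qed.

Lemma bigmax_ge (I : eqType) (r : seq I) (F : I -> R) j :
  j \in r -> F j <= \big[Rmax/0]_(i <- r) F i.
Proof.
elim: r => // a r IH; rewrite in_cons big_cons => /orP [/eqP -> | h].
  exact: Rmax_l.
exact: Rle_trans (IH h) (Rmax_r _ _).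
Qed.

Lemma bigmax_ge0 (I : Type) (r : seq I) (F : I -> R) : 0 <= \big[Rmax/0]_(i <- r) F i.
Proof.
elim: r => [|a r IH]; first by rewrite big_nil; lra.
by rewrite big_cons; apply: Rle_trans IH (Rmax_r _ _).
Qed.

(** * Euclidean geometry of R^p *)

Section Euclid.
Context {p : nat}.
Implicit Types u v w : Vec p.

Definition dot u v := \big[Rplus/0]_(j < p) (u j * v j).

Lemma dotC u v : dot u v = dot v u.
Proof. by rewrite /dot; apply: eq_bigr => j _; ring. Qed.

Lemma dot_ge0 v : 0 <= dot v v.
Proof. by apply: big_ge0 => j _; apply: Rle_0_sqr. Qed.

Lemma dotDl u w v : dot (vadd u w) v = dot u v + dot w v.
Proof. by rewrite /dot -big_split; apply: eq_bigr => j _; rewrite /vadd /=; ring. Qed.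

Lemma dotZl a u v : dot (vscale a u) v = a * dot u v.
Proof. by rewrite /dot big_distrr; apply: eq_bigr => j _; rewrite /vscale /=; ring. Qed.

Lemma dotBl u w v : dot (vsub u w) v = dot u v - dot w v.
Proof.
have -> : vsub u w = vadd u (vscale (-1) w) by vext.
by rewrite dotDl dotZl; ring.
Qed.

Lemma dotDr u w v : dot v (vadd u w) = dot v u + dot v w.
Proof. by rewrite dotC dotDl !(dotC v). Qed.

Lemma dotBr u w v : dot v (vsub u w) = dot v u - dot v w.
Proof. by rewrite dotC dotBl !(dotC v). Qed.

Lemma dotZr a u v : dot v (vscale a u) = a * dot v u.
Proof. by rewrite dotC dotZl dotC. Qed.

Lemma dot0l v : dot vzero v = 0.
Proof. by rewrite /dot big1 // => j _; rewrite /vzero /=; ring. Qed.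

Lemma dot_eq0 v : dot v v = 0 -> v = vzero.
Proof.
move=> H; apply: functional_extensionality => j; rewrite /vzero.
have : v j * v j <= dot v v.
  rewrite /dot (bigD1 j) //=.
  set S := \big[Rplus/0]_(i < p | _) _.
  have : 0 <= S by apply: big_ge0 => i _; apply: Rle_0_sqr.
  lra.
by rewrite H; have := Rle_0_sqr (v j); rewrite /Rsqr; nra.
Qed.

Lemma norm2_ge0 v : 0 <= norm2 v.
Proof. exact: sqrt_pos. Qed.

Lemma norm2_sqr v : norm2 v * norm2 v = dot v v.
Proof. by rewrite /norm2 sqrt_sqrt //; apply: dot_ge0. Qed.

Lemma norm2_eq0 v : norm2 v = 0 -> v = vzero.
Proof. by move=> H; apply: dot_eq0; rewrite -norm2_sqr H; ring. Qed.

Lemma norm2_gt0 v : v <> vzero -> 0 < norm2 v.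
Proof.
move=> H; case: (Rle_lt_or_eq_dec _ _ (norm2_ge0 v)) => // h.
by case: H; apply: norm2_eq0.
Qed.

Lemma norm2_0 : norm2 (@vzero p) = 0.
Proof. by rewrite /norm2 -/(dot vzero vzero) dot0l sqrt_0. Qed.

Lemma Rabs_dot_le u v : Rabs (dot u v) <= norm2 u * norm2 v.
Proof.
have [H|H] := Req_dec (dot u u) 0.
  by rewrite (dot_eq0 H) dot0l Rabs_R0; apply: Rmult_le_pos; apply: norm2_ge0.
set a := dot u u; set b := dot u v; set c := dot v v.
have ha : 0 < a by have := dot_ge0 u; rewrite -/a in H *; lra.
have h := dot_ge0 (vsub (vscale a v) (vscale b u)).
rewrite !(dotBl, dotBr, dotZl, dotZr) -/a -/c (dotC v u) -/b in h.
have hb : b * b <= a * c by nra.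
apply: Rsqr_incr_0_var; last by apply: Rmult_le_pos; apply: norm2_ge0.
rewrite -Rsqr_abs /Rsqr.
have -> : norm2 u * norm2 v * (norm2 u * norm2 v) = (norm2 u * norm2 u) * (norm2 v * norm2 v)
  by ring.
by rewrite !norm2_sqr.
Qed.

Lemma norm2_triangle u v : norm2 (vadd u v) <= norm2 u + norm2 v.
Proof.
apply: Rsqr_incr_0_var; last by have := norm2_ge0 u; have := norm2_ge0 v; lra.
rewrite /Rsqr norm2_sqr !(dotDl, dotDr) (dotC v u).
by have := Rabs_dot_le u v; have := Rle_abs (dot u v); rewrite -!norm2_sqr; nra.
Qed.

Lemma norm2Z a v : norm2 (vscale a v) = Rabs a * norm2 v.
Proof.
apply: Rsqr_inj; [exact: norm2_ge0 | by apply: Rmult_le_pos; [apply: Rabs_pos | apply: norm2_ge0]|].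
rewrite /Rsqr norm2_sqr dotZl dotZr.
have -> : Rabs a * norm2 v * (Rabs a * norm2 v) = (Rabs a * Rabs a) * (norm2 v * norm2 v) by ring.
by rewrite norm2_sqr -Rabs_mult Rabs_right; [ring | apply: Rle_ge; apply: Rle_0_sqr].
Qed.

Lemma norm2_vsubC u v : norm2 (vsub u v) = norm2 (vsub v u).
Proof.
have -> : vsub u v = vscale (-1) (vsub v u) by vext.
by rewrite norm2Z Rabs_Ropp Rabs_R1; ring.
Qed.

Lemma vsub0 v : vsub v vzero = v.
Proof. by vext. Qed.

Lemma vsubv v : vsub v v = vzero.
Proof. by vext. Qed.

Lemma vsubBB u v w : vsub (vsub u w) (vsub v w) = vsub u v.
Proof. by vext. Qed.

Lemma norm2_sub_le u v : norm2 (vsub u v) <= norm2 u + norm2 v.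
Proof.
have -> : vsub u v = vadd u (vscale (-1) v) by vext.
by have := norm2_triangle u (vscale (-1) v); rewrite norm2Z Rabs_Ropp Rabs_R1; lra.
Qed.

Lemma norm2_sub_triangle u v w : norm2 (vsub u w) <= norm2 (vsub u v) + norm2 (vsub v w).
Proof.
have -> : vsub u w = vadd (vsub u v) (vsub v w) by vext.
exact: norm2_triangle.
Qed.

Lemma norm2_le_add_sub u v : norm2 u <= norm2 v + norm2 (vsub u v).
Proof.
have := norm2_sub_triangle u v vzero; rewrite !vsub0 norm2_vsubC; lra.
Qed.

Lemma norm2_sum_le (I : Type) (r : seq I) (P : pred I) (F : I -> Vec p) :
  norm2 (fun j => \big[Rplus/0]_(i <- r | P i) F i j) <= \big[Rplus/0]_(i <- r | P i) norm2 (F i).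
Proof.
elim: r => [|a r IH].
  have -> : (fun j => \big[Rplus/0]_(i <- [::] | P i) F i j) = vzero.
    by apply: functional_extensionality => j; rewrite big_nil.
  by rewrite big_nil norm2_0; lra.
rewrite big_cons; case Pa: (P a); last first.
  have -> : (fun j => \big[Rplus/0]_(i <- a :: r | P i) F i j) =
            (fun j => \big[Rplus/0]_(i <- r | P i) F i j).
    by apply: functional_extensionality => j; rewrite big_cons Pa.
  exact: IH.
have -> : (fun j => \big[Rplus/0]_(i <- a :: r | P i) F i j) =
          vadd (F a) (fun j => \big[Rplus/0]_(i <- r | P i) F i j).
  by apply: functional_extensionality => j; rewrite big_cons Pa.
by have := norm2_triangle (F a) (fun j => \big[Rplus/0]_(i <- r | P i) F i j); lra.
Qed.

End Euclid.

(** * Affine Gram-Schmidt *)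

Lemma dist2_is_inf q (S : Vec q -> Prop) y d :
  is_inf (fun a => exists z, S z /\ a = norm2 (vsub y z)) d -> dist2 y S = d.
Proof.
move=> [H1 H2]; rewrite /dist2.
set E := is_inf _.
have [h1 h2] := epsilon_spec (inhabits 0) E (ex_intro _ d (conj H1 H2)).
by apply: Rle_antisym; [apply: H2 h1 | apply: h2 H1].
Qed.

Section AffineProjection.
Context {p : nat}.
Variable s : nat -> Vec p.

Definition comb (l : nat) (c : nat -> R) : Vec p :=
  fun j => \big[Rplus/0]_(0 <= i < l.+1) (c i * s i j).
Definition csum (l : nat) (c : nat -> R) : R := \big[Rplus/0]_(0 <= i < l.+1) c i.
Definition aff (l : nat) : Vec p -> Prop :=
  fun y => exists c, csum l c = 1 /\ y = comb l c.

Lemma combS l c : comb l.+1 c = vadd (comb l c) (vscale (c l.+1) (s l.+1)).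
Proof. by apply: functional_extensionality => j; rewrite /comb big_nat_recr. Qed.

Lemma csumS l c : csum l.+1 c = csum l c + c l.+1.
Proof. by rewrite /csum big_nat_recr. Qed.

Lemma comb0 c : comb 0 c = vscale (c 0%N) (s 0%N).
Proof. by apply: functional_extensionality => j; rewrite /comb big_nat1. Qed.

Lemma csum0 c : csum 0 c = c 0%N.
Proof. by rewrite /csum big_nat1. Qed.

Lemma combD l a b c d :
  comb l (fun i => a * c i + b * d i) = vadd (vscale a (comb l c)) (vscale b (comb l d)).
Proof.
apply: functional_extensionality => j; rewrite /comb /vadd /vscale !big_distrr -big_split.
by apply: eq_bigr => i _ /=; ring.
Qed.

Lemma csumD l a b c d : csum l (fun i => a * c i + b * d i) = a * csum l c + b * csum l d.
Proof. by rewrite /csum !big_distrr -big_split; apply: eq_bigr => i _ /=; ring. Qed.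

Lemma eq_comb l c d : (forall i, (i <= l)%N -> c i = d i) -> comb l c = comb l d.
Proof.
move=> H; apply: functional_extensionality => j; apply: eq_big_nat => i /andP [_ hi].
by rewrite H.
Qed.

Lemma eq_csum l c d : (forall i, (i <= l)%N -> c i = d i) -> csum l c = csum l d.
Proof. by move=> H; apply: eq_big_nat => i /andP [_ hi]; rewrite H. Qed.

Lemma comb_widen l k c : (forall i, (l < i)%N -> c i = 0) -> comb (l + k) c = comb l c.
Proof.
move=> H; elim: k => [|k IH]; first by rewrite addn0.
rewrite addnS combS IH H ?ltnS ?leq_addr //; vext.
Qed.

Lemma csum_widen l k c : (forall i, (l < i)%N -> c i = 0) -> csum (l + k) c = csum l c.
Proof.
move=> H; elim: k => [|k IH]; first by rewrite addn0.
by rewrite addnS csumS IH H ?ltnS ?leq_addr //; ring.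
Qed.

(* Affine Gram-Schmidt: the nearest point of [aff l.+1] to [q] is that of [aff l] moved along
   the residual [s l.+1 - P_l (s l.+1)] by the component of [q - P_l q] on it (junk step 0
   when the residual vanishes). *)
Fixpoint proj_coef (l : nat) (q : Vec p) {struct l} : nat -> R :=
  match l with
  | O => fun i => if i == 0%N then 1 else 0
  | S l' => let d := proj_coef l' (s l) in
            let e := vsub (s l) (comb l' d) in
            let a := dot (vsub q (comb l' (proj_coef l' q))) e / dot e e in
            fun i => proj_coef l' q i + a * ((if i == l then 1 else 0) - d i)
  end.

Definition aff_proj l q := comb l (proj_coef l q).
Definition gs_res l := vsub (s l.+1) (aff_proj l (s l.+1)).
Definition proj_step l q := dot (vsub q (aff_proj l q)) (gs_res l) / dot (gs_res l) (gs_res l).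

Lemma proj_coefS l q i :
  proj_coef l.+1 q i =
  proj_coef l q i + proj_step l q * ((if i == l.+1 then 1 else 0) - proj_coef l (s l.+1) i).
Proof. by []. Qed.

Lemma proj_coef_out l q i : (l < i)%N -> proj_coef l q i = 0.
Proof.
elim: l q i => [|l IH] q i hi; first by case: i hi.
rewrite proj_coefS !IH ?(ltnW hi) //.
have -> : (i == l.+1) = false by apply/negbTE; rewrite neq_ltn hi orbT.
ring.
Qed.

Lemma proj_coefS_low l q i : (i <= l)%N ->
  proj_coef l.+1 q i = 1 * proj_coef l q i + (- proj_step l q) * proj_coef l (s l.+1) i.
Proof.
move=> hi; rewrite proj_coefS.
have -> : (i == l.+1) = false by apply/negbTE; rewrite neq_ltn ltnS hi.
ring.
Qed.

Lemma csum_proj_coef l q : csum l (proj_coef l q) = 1.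
Proof.
elim: l q => [|l IH] q; first by rewrite csum0.
rewrite csumS (eq_csum (proj_coefS_low (l:=l) q)) csumD !IH proj_coefS eqxx !proj_coef_out //.
ring.
Qed.

Lemma aff_projS l q : aff_proj l.+1 q = vadd (aff_proj l q) (vscale (proj_step l q) (gs_res l)).
Proof.
rewrite /aff_proj combS (eq_comb (proj_coefS_low (l:=l) q)) combD proj_coefS eqxx !proj_coef_out //.
by apply: functional_extensionality => j; rewrite /vadd /vscale /gs_res /vsub /aff_proj /=; ring.
Qed.

Lemma aff_proj_mem l q : aff l (aff_proj l q).
Proof. by exists (proj_coef l q); split => //; apply: csum_proj_coef. Qed.

Definition proj_orth l q := forall c, csum l c = 0 -> dot (vsub q (aff_proj l q)) (comb l c) = 0.

Lemma proj_orth0 q : proj_orth 0 q.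
Proof. by move=> c; rewrite csum0 comb0 dotZr => ->; ring. Qed.

Lemma proj_orthS l :
  (forall q, proj_orth l q) -> dot (gs_res l) (gs_res l) <> 0 -> forall q, proj_orth l.+1 q.
Proof.
move=> IH hE q c hc.
set d := proj_coef l (s l.+1).
set c' := fun i => 1 * c i + c l.+1 * d i.
have hcomb : comb l.+1 c = vadd (comb l c') (vscale (c l.+1) (gs_res l)).
  rewrite combS /c' combD.
  apply: functional_extensionality => j.
  by rewrite /vadd /vscale /gs_res /vsub /aff_proj /d /=; ring.
have hc' : csum l c' = 0 by rewrite /c' csumD /d csum_proj_coef; rewrite csumS in hc; lra.
have h1 := IH q c' hc'.
have h2 := IH (s l.+1) c' hc'.
rewrite -/(gs_res l) in h2.
have -> : vsub q (aff_proj l.+1 q) =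
          vsub (vsub q (aff_proj l q)) (vscale (proj_step l q) (gs_res l)).
  by rewrite aff_projS; vext.
rewrite hcomb; move: h1 h2; rewrite /proj_step.
set X := vsub q _; set e := gs_res l; set Y := comb l c' => h1 h2.
rewrite dotBl !(dotDr Y) !dotZl !dotZr h1 h2.
by field.
Qed.

Lemma aff_proj_pythagoras l q c : proj_orth l q -> csum l c = 1 ->
  dot (vsub q (comb l c)) (vsub q (comb l c)) =
  dot (vsub q (aff_proj l q)) (vsub q (aff_proj l q)) +
  dot (vsub (aff_proj l q) (comb l c)) (vsub (aff_proj l q) (comb l c)).
Proof.
move=> ho hc.
have hw : vsub (aff_proj l q) (comb l c) = comb l (fun i => 1 * proj_coef l q i + (-1) * c i).
  by rewrite combD /aff_proj; vext.
have h0 : dot (vsub q (aff_proj l q)) (vsub (aff_proj l q) (comb l c)) = 0.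
  by rewrite hw ho // csumD csum_proj_coef hc; ring.
have -> : vsub q (comb l c) = vadd (vsub q (aff_proj l q)) (vsub (aff_proj l q) (comb l c)) by vext.
move: h0; set X := vsub q _; set W := vsub _ (comb l c) => h0.
by rewrite (dotDl X W) (dotDr X W X) (dotDr X W W) (dotC W X) h0; ring.
Qed.

Lemma aff_proj_min l q y : proj_orth l q -> aff l y ->
  norm2 (vsub q (aff_proj l q)) <= norm2 (vsub q y).
Proof.
move=> ho [c [hc ->]]; apply: sqrt_le_1_alt.
rewrite -/(dot _ _) -/(dot (vsub q (comb l c)) _) aff_proj_pythagoras //.
by have := dot_ge0 (vsub (aff_proj l q) (comb l c)); lra.
Qed.

Lemma dist2_aff l q : proj_orth l q -> dist2 q (aff l) = norm2 (vsub q (aff_proj l q)).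
Proof.
move=> ho; apply: dist2_is_inf; split.
  by move=> a [z [hz ->]]; apply: aff_proj_min.
by move=> d' H; apply: H; exists (aff_proj l q); split => //; apply: aff_proj_mem.
Qed.

Lemma dist2_aff_le l u v : proj_orth l u -> proj_orth l v ->
  dist2 u (aff l) <= norm2 (vsub u v) + dist2 v (aff l).
Proof.
move=> hu hv; rewrite !dist2_aff //.
apply: Rle_trans (aff_proj_min hu (aff_proj_mem l v)) _.
exact: norm2_sub_triangle.
Qed.

End AffineProjection.

(** * Separated families *)

Section Bessel.
Context {p : nat}.

Definition orthonormal (n : nat) (u : nat -> Vec p) :=
  forall i j, (i < n)%N -> (j < n)%N -> dot (u i) (u j) = if i == j then 1 else 0.

Lemma dot_basisl (j0 : 'I_p) (v : Vec p) : dot (basis j0) v = v j0.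
Proof.
rewrite /dot (bigD1 j0) //= big1 /basis ?eqxx => [|j hj]; first ring.
by rewrite (negbTE hj); ring.
Qed.

Lemma dot_suml n (F : 'I_n -> Vec p) (v : Vec p) :
  dot (fun j => \big[Rplus/0]_(i < n) F i j) v = \big[Rplus/0]_(i < n) dot (F i) v.
Proof. by rewrite /dot; under eq_bigr do rewrite big_distrl; rewrite exchange_big. Qed.

Lemma dot_sumr n (F : 'I_n -> Vec p) (v : Vec p) :
  dot v (fun j => \big[Rplus/0]_(i < n) F i j) = \big[Rplus/0]_(i < n) dot v (F i).
Proof. by rewrite dotC dot_suml; apply: eq_bigr => i _; apply: dotC. Qed.

Lemma orthonormal_coord_le n u (j0 : 'I_p) :
  orthonormal n u -> \big[Rplus/0]_(i < n) (u i j0 * u i j0) <= 1.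
Proof.
move=> Hu.
set w := fun j => \big[Rplus/0]_(i < n) vscale (u i j0) (u i) j.
have collapse (a : 'I_n -> R) (i : 'I_n) :
    \big[Rplus/0]_(k < n) (a k * dot (u i) (u k)) = a i.
  rewrite (bigD1 i) //= big1 => [|k hk]; first by rewrite Hu // eqxx; ring.
  rewrite Hu // (negbTE (_ : nat_of_ord i != k)); first ring.
  by rewrite eq_sym.
have hww : dot w w = \big[Rplus/0]_(i < n) (u i j0 * u i j0).
  rewrite /w dot_suml; apply: eq_bigr => i _; rewrite dotZl dot_sumr.
  by under eq_bigr do rewrite dotZr; rewrite collapse.
have h := dot_ge0 (vsub (basis j0) w).
have hwj : w j0 = \big[Rplus/0]_(i < n) (u i j0 * u i j0) by [].
rewrite dotBl !dotBr !dot_basisl (dotC w) dot_basisl /basis eqxx hww hwj in h.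
lra.
Qed.

Lemma orthonormal_size_le n u : orthonormal n u -> (n <= p)%N.
Proof.
move=> Hu; apply/leP; apply: INR_le; rewrite -!sum_ord_1.
have -> : \big[Rplus/0]_(i < n) 1 = \big[Rplus/0]_(i < n) \big[Rplus/0]_(j < p) (u i j * u i j).
  by apply: eq_bigr => i _; rewrite -/(dot (u i) (u i)) Hu // eqxx.
rewrite exchange_big /=; apply: big_Rle => j _.
exact: orthonormal_coord_le.
Qed.

End Bessel.

Fixpoint gs_bound (t : R) (l : nat) : R :=
  match l with O => 1 | S l' => gs_bound t l' + (1 + 2 / t) * (1 + gs_bound t l') end.

Lemma gs_boundE t l : 0 < t -> gs_bound t l + 1 = 2 * (2 + 2 / t) ^ l.
Proof.
move=> ht; elim: l => [|l IH] /=; first ring.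
have -> : (2 + 2 / t) ^ l = (gs_bound t l + 1) / 2 by rewrite IH; field.
field; lra.
Qed.

Definition coef_const (l : nat) : R := 2 * 4 ^ l.

Lemma coef_const_gt0 l : 0 < coef_const l.
Proof. by apply: Rmult_lt_0_compat; [lra | apply: pow_lt; lra]. Qed.

Lemma coef_const_le l l' : (l <= l')%N -> coef_const l <= coef_const l'.
Proof. by move=> /leP hl; apply: Rmult_le_compat_l; [lra | apply: Rle_pow; [lra | exact: hl]]. Qed.

Lemma gs_bound_le t l : 0 < t -> gs_bound t l <= coef_const l * (1 + / t ^ l).
Proof.
rewrite /coef_const => ht; have := gs_boundE l ht.
have -> : 2 + 2 / t = 2 * (1 + / t) by rewrite /Rdiv; ring.
rewrite Rpow_mult_distr => h.
have h4 : (4 : R) ^ l = 2 ^ l * 2 ^ l by rewrite -Rpow_mult_distr; congr (_ ^ _); ring.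
have hp2 : 0 < 2 ^ l by apply: pow_lt; lra.
have hti : 0 < / t ^ l by apply: Rinv_0_lt_compat; apply: pow_lt.
have hit := Rinv_0_lt_compat t ht.
have key : (1 + / t) ^ l <= 2 ^ l * (1 + / t ^ l).
  case: (Rle_lt_dec 1 t) => h1.
    have : (1 + / t) ^ l <= 2 ^ l.
      apply: pow_incr; split; first lra.
      have : / t <= 1 by rewrite -Rinv_1; apply: Rinv_le_contravar; lra.
      lra.
    nra.
  have : (1 + / t) ^ l <= (2 * / t) ^ l.
    apply: pow_incr; split; first lra.
    have : 1 <= / t by rewrite -Rinv_1; apply: Rinv_le_contravar; lra.
    lra.
  rewrite Rpow_mult_distr pow_inv; nra.
rewrite h4; nra.
Qed.

Section SeparatedFamily.
Context {p : nat}.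
Variables (s : nat -> Vec p) (m : nat) (t : R).
Hypothesis Ht : 0 < t.
Hypothesis Hnz : forall i, (i <= m)%N -> s i <> vzero.
Hypothesis Hd : forall i, (1 <= i <= m)%N ->
  dist2 (s i) (aff s i.-1) >= t * \big[Rmax/0]_(i <= j < m.+1) norm2 (s j).

Lemma dist_ge i j : (1 <= i <= m)%N -> (i <= j <= m)%N ->
  t * norm2 (s j) <= dist2 (s i) (aff s i.-1).
Proof.
move=> hi /andP [hij hjm].
have : norm2 (s j) <= \big[Rmax/0]_(i <= j < m.+1) norm2 (s j).
  by apply: (@bigmax_ge _ _ (fun j => norm2 (s j))); rewrite mem_index_iota hij ltnS.
have := Hd hi; nra.
Qed.

Lemma proj_orth_le l : (l <= m)%N -> forall q, proj_orth s l q.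
Proof.
elim: l => [|l IH] hl q; first exact: proj_orth0.
have IH' := IH (ltnW hl).
apply: proj_orthS => //.
have h := @dist_ge l.+1 l.+1; rewrite /= dist2_aff // in h.
have hpos := norm2_gt0 (Hnz hl).
have : 0 < norm2 (gs_res s l).
  by have := h (ltac:(by rewrite hl)) (ltac:(by rewrite leqnn hl)); rewrite /gs_res; nra.
rewrite -norm2_sqr; nra.
Qed.

Lemma dist2_aff_gs_res i : (i < m)%N -> dist2 (s i.+1) (aff s i) = norm2 (gs_res s i).
Proof. by move=> hi; rewrite dist2_aff //; apply: proj_orth_le; apply: ltnW. Qed.

Lemma gs_res_gt0 i : (i < m)%N -> 0 < norm2 (gs_res s i).
Proof.
move=> hi; have := @dist_ge i.+1 i.+1 (ltac:(by rewrite hi)) (ltac:(by rewrite leqnn hi)).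
by rewrite /= dist2_aff_gs_res //; have := norm2_gt0 (Hnz hi); nra.
Qed.

(* The denominator is |e_l|^2 >= t |s_(l+1)| |e_l|, and the numerator is
   <q - s_(l+1), e_l> + |e_l|^2 since e_l is orthogonal to aff s l. *)
Lemma proj_step_bound l q : (l < m)%N ->
  t * norm2 q <= dist2 (s l.+1) (aff s l) -> Rabs (proj_step s l q) <= 1 + 2 / t.
Proof.
move=> hl hq.
have hN := gs_res_gt0 hl.
have hs := @dist_ge l.+1 l.+1 (ltac:(by rewrite hl)) (ltac:(by rewrite leqnn hl)).
rewrite /= dist2_aff_gs_res // in hs; rewrite dist2_aff_gs_res // in hq.
set N := norm2 (gs_res s l) in hq hs hN.
have ho := proj_orth_le (ltnW hl) (s l.+1).
have hX : dot (vsub q (aff_proj s l q)) (gs_res s l) =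
          dot (vsub q (s l.+1)) (gs_res s l) + dot (gs_res s l) (gs_res s l).
  set W := vsub (aff_proj s l (s l.+1)) (aff_proj s l q).
  have hw : W = comb s l (fun i => 1 * proj_coef s l (s l.+1) i + (-1) * proj_coef s l q i).
    by rewrite combD /W /aff_proj; vext.
  have h0 : dot (gs_res s l) W = 0.
    by rewrite hw; apply: ho; rewrite csumD !csum_proj_coef; ring.
  have -> : vsub q (aff_proj s l q) = vadd (vadd (vsub q (s l.+1)) (gs_res s l)) W.
    by rewrite /W /gs_res; vext.
  by rewrite (dotDl (vadd _ _) W) dotDl (dotC W) h0; ring.
rewrite /proj_step hX -norm2_sqr -/N.
have hcs := Rabs_dot_le (vsub q (s l.+1)) (gs_res s l); rewrite -/N in hcs.
have htri := norm2_sub_le q (s l.+1).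
set X := dot (vsub q (s l.+1)) (gs_res s l) in hcs *.
have -> : (X + N * N) / (N * N) = X / (N * N) + 1 by field; lra.
apply: Rle_trans (Rabs_triang _ _) _; rewrite Rabs_R1.
suff : Rabs (X / (N * N)) <= 2 / t by lra.
rewrite Rabs_mult Rabs_inv (Rabs_right (N * N)); last by apply: Rle_ge; nra.
have hq0 := norm2_ge0 q; have hs0 := norm2_ge0 (s l.+1).
have hX1 : Rabs X <= (norm2 q + norm2 (s l.+1)) * N.
  by apply: Rle_trans hcs _; apply: Rmult_le_compat_r; lra.
have hX2 : t * Rabs X <= 2 * (N * N) by nra.
apply: (Rmult_le_reg_l t) => //; apply: (Rmult_le_reg_r (N * N)); first nra.
have -> : t * (Rabs X * / (N * N)) * (N * N) = t * Rabs X by field; lra.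
have -> : t * (2 / t) * (N * N) = 2 * (N * N) by field; lra.
exact: hX2.
Qed.

Lemma proj_coef_bound l : (l <= m)%N -> forall q,
  (forall i, (1 <= i <= l)%N -> t * norm2 q <= dist2 (s i) (aff s i.-1)) ->
  forall i, Rabs (proj_coef s l q i) <= gs_bound t l.
Proof.
elim: l => [|l IH] hl q hq i.
  by rewrite /=; case: (i == 0%N); rewrite ?Rabs_R1 ?Rabs_R0; lra.
rewrite proj_coefS /=.
have h1 : Rabs (proj_coef s l q i) <= gs_bound t l.
  by apply: (IH (ltnW hl) q) => j /andP [hj1 hj2]; apply: hq; rewrite hj1 /= ltnW.
have h2 : Rabs (proj_coef s l (s l.+1) i) <= gs_bound t l.
  apply: (IH (ltnW hl) (s l.+1)) => j /andP [hj1 hj2]; apply: dist_ge.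
    by rewrite hj1 /= (leq_trans hj2 (ltnW hl)).
  by rewrite (leq_trans hj2 (leqnSn _)) hl.
have h3 := proj_step_bound hl (hq l.+1 (ltac:(by rewrite leqnn))).
set d := (if i == l.+1 then 1 else 0) - proj_coef s l (s l.+1) i.
have h4 : Rabs d <= 1 + gs_bound t l.
  rewrite /d /Rminus; apply: Rle_trans (Rabs_triang _ _) _; rewrite Rabs_Ropp.
  by case: (i == l.+1); rewrite ?Rabs_R1 ?Rabs_R0; lra.
apply: Rle_trans (Rabs_triang _ _) _; rewrite Rabs_mult.
have : Rabs (proj_step s l q) * Rabs d <= (1 + 2 / t) * (1 + gs_bound t l).
  by apply: Rmult_le_compat => //; apply: Rabs_pos.
lra.
Qed.

Lemma comb_indep l : (l <= m)%N -> forall c, csum l c = 0 -> comb s l c = vzero ->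
  forall i, (i <= l)%N -> c i = 0.
Proof.
elim: l => [|l IH] hl c hc hcomb i hi.
  by move: hi; rewrite leqn0 => /eqP ->; rewrite csum0 in hc.
rewrite csumS in hc; rewrite combS in hcomb.
case: (Req_dec (c l.+1) 0) => hcl.
  have hcomb' : comb s l c = vzero by rewrite -hcomb hcl; vext.
  move: hi; rewrite leq_eqVlt => /orP [/eqP -> // | hi].
  by apply: (IH (ltnW hl)) => //; lra.
exfalso.
have hA : aff s l (s l.+1).
  exists (fun i => (- / c l.+1) * c i + 0 * c i); split.
    by rewrite csumD (_ : csum l c = - c l.+1); [field | lra].
  rewrite combD; apply: functional_extensionality => j.
  have := f_equal (fun v => v j) hcomb; rewrite /vadd /vscale /vzero /= => hj.
  transitivity (/ c l.+1 * (c l.+1 * s l.+1 j)); first by field.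
  by rewrite (_ : c l.+1 * s l.+1 j = - comb s l c j); [ring | lra].
have := aff_proj_min (proj_orth_le (ltnW hl) (s l.+1)) hA.
rewrite vsubv norm2_0 -/(gs_res s l).
by have := gs_res_gt0 hl; lra.
Qed.

Lemma gs_res_orth i j : (i < j)%N -> (j < m)%N -> dot (gs_res s j) (gs_res s i) = 0.
Proof.
move=> hij hjm.
set cE := fun k => 1 * (if k == i.+1 then 1 else 0) + (-1) * proj_coef s i (s i.+1) k.
have hout k : (i.+1 < k)%N -> cE k = 0.
  move=> hk; rewrite /cE proj_coef_out; last exact: ltn_trans hk.
  by rewrite (negbTE (_ : k != i.+1)) ?neq_ltn ?hk ?orbT //; ring.
have hlow k : (k <= i)%N -> cE k = 0 * proj_coef s i (s i.+1) k + (-1) * proj_coef s i (s i.+1) k.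
  by move=> hk; rewrite /cE (negbTE (_ : k != i.+1)) ?neq_ltn ?ltnS ?hk //; ring.
have hcE : comb s i.+1 cE = gs_res s i.
  rewrite combS (eq_comb _ hlow) combD /cE proj_coef_out // eqxx.
  by apply: functional_extensionality => k; rewrite /gs_res /aff_proj /vadd /vscale /vsub /=; ring.
have hsum : csum i.+1 cE = 0.
  by rewrite csumS (eq_csum hlow) csumD csum_proj_coef /cE proj_coef_out // eqxx; ring.
have hj : j = (i.+1 + (j - i.+1))%N by rewrite subnKC.
rewrite -hcE -(comb_widen _ (j - i.+1) hout) -hj.
apply: proj_orth_le (ltnW hjm) _ _ _.
by rewrite hj csum_widen.
Qed.

Lemma m_le_dim : (m <= p)%N.
Proof.
apply: (@orthonormal_size_le _ m (fun i => vscale (/ norm2 (gs_res s i)) (gs_res s i))).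
move=> i j hi hj; rewrite dotZl dotZr.
have hNi := gs_res_gt0 hi; have hNj := gs_res_gt0 hj.
case: (ltngtP i j) => hij.
- by rewrite (dotC (gs_res s i)) gs_res_orth //; ring.
- by rewrite gs_res_orth //; ring.
- by rewrite hij -norm2_sqr; field; lra.
Qed.

Lemma dist2_aff_zero : dist2 vzero (aff s m) = norm2 (aff_proj s m vzero).
Proof. by rewrite dist2_aff ?(norm2_vsubC vzero) ?vsub0 //; apply: proj_orth_le. Qed.

Lemma min_coef_unique c : csum m c = 1 -> norm2 (comb s m c) = dist2 vzero (aff s m) ->
  forall i, (i <= m)%N -> c i = proj_coef s m vzero i.
Proof.
move=> hc1 hcD i hi.
have hpy := aff_proj_pythagoras (proj_orth_le (leqnn m) vzero) hc1.
rewrite -!norm2_sqr !(norm2_vsubC vzero) !vsub0 hcD dist2_aff_zero in hpy.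
have hz : vsub (aff_proj s m vzero) (comb s m c) = vzero by apply: norm2_eq0; nra.
have hd : comb s m (fun k => 1 * proj_coef s m vzero k + (-1) * c k) = vzero.
  rewrite combD -/(aff_proj s m vzero); apply: functional_extensionality => j.
  by have := f_equal (fun v => v j) hz; cbv [vadd vscale vsub vzero] => h; lra.
have hd0 : csum m (fun k => 1 * proj_coef s m vzero k + (-1) * c k) = 0.
  by rewrite csumD hc1 csum_proj_coef; ring.
by have := comb_indep (leqnn m) hd0 hd hi; lra.
Qed.

Lemma min_coef_bound i : Rabs (proj_coef s m vzero i) <= coef_const m * (1 + / t ^ m).
Proof.
apply: Rle_trans (gs_bound_le m Ht).
apply: (proj_coef_bound (leqnn m)) => j /andP [hj1 hj2].
rewrite norm2_0 Rmult_0_r.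
have hj : (j.-1 < m)%N by rewrite prednK.
rewrite -(prednK hj1) dist2_aff_gs_res //; exact: norm2_ge0.
Qed.

End SeparatedFamily.

(** * The extrapolation step *)

Section Lincomb.
Context {q m : nat}.
Implicit Types (c : 'I_m.+1 -> R) (u v : nat -> Vec q).

Lemma lincomb_sub k c u v :
  lincomb k c (fun j => vsub (u j) (v j)) = vsub (lincomb k c u) (lincomb k c v).
Proof.
apply: functional_extensionality => j; rewrite /lincomb /vsub /Rminus.
have -> : (- \big[Rplus/0]_(i < m.+1) (c i * v (k - m + i)%N j)) =
          \big[Rplus/0]_(i < m.+1) (-1 * (c i * v (k - m + i)%N j)).
  by rewrite -big_distrr /=; ring.
by rewrite -big_split; apply: eq_bigr => i _ /=; ring.
Qed.

Lemma lincomb_const k c (w : Vec q) :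
  \big[Rplus/0]_(i < m.+1) c i = 1 -> lincomb k c (fun _ => w) = w.
Proof.
by move=> hc; apply: functional_extensionality => j; rewrite /lincomb -big_distrl /= hc; ring.
Qed.

Lemma lincomb_mapply {q'} (A : Mat q' q) k c v :
  mapply A (lincomb k c v) = lincomb k c (fun j => mapply A (v j)).
Proof.
apply: functional_extensionality => i; rewrite /mapply /lincomb.
under eq_bigr do rewrite big_distrr.
rewrite exchange_big; apply: eq_bigr => l _ /=; rewrite big_distrr.
by apply: eq_bigr => j _ /=; ring.
Qed.

Lemma eq_lincomb k c u v :
  (forall i : 'I_m.+1, u (k - m + i)%N = v (k - m + i)%N) -> lincomb k c u = lincomb k c v.
Proof.
by move=> H; apply: functional_extensionality => j; apply: eq_bigr => i _; rewrite H.
Qed.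

Lemma norm2_lincomb_le k c v beta :
  (forall i : 'I_m.+1, norm2 (v (k - m + i)%N) <= beta) ->
  norm2 (lincomb k c v) <= (\big[Rplus/0]_(i < m.+1) Rabs (c i)) * beta.
Proof.
move=> H.
have -> : lincomb k c v =
    (fun j => \big[Rplus/0]_(i < m.+1) vscale (c i) (v (k - m + i)%N) j) by [].
apply: Rle_trans (norm2_sum_le _ _ _) _.
rewrite big_distrl; apply: big_Rle => i _ /=; rewrite norm2Z.
by apply: Rmult_le_compat_l; [apply: Rabs_pos | apply: H].
Qed.

Lemma sum_abs_ge1 c : \big[Rplus/0]_(i < m.+1) c i = 1 -> 1 <= \big[Rplus/0]_(i < m.+1) Rabs (c i).
Proof. by move=> hc; rewrite -{1}hc; apply: big_Rle => i _; apply: Rle_abs. Qed.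

Lemma sum_abs_le c b : (forall i, Rabs (c i) <= b) ->
  \big[Rplus/0]_(i < m.+1) Rabs (c i) <= (INR m + 1) * b.
Proof.
move=> H; rewrite -S_INR -sum_ord_1 big_distrl; apply: big_Rle => i _.
by rewrite /= Rmult_1_l.
Qed.

Lemma lincomb_comb k c v :
  lincomb k c v = comb (fun i => v (k - m + i)%N) m (fun i => c (inord i)).
Proof.
apply: functional_extensionality => j; rewrite /comb /lincomb big_mkord.
by apply: eq_bigr => i _; rewrite inord_val.
Qed.

Lemma sum_csum c : \big[Rplus/0]_(i < m.+1) c i = csum m (fun i => c (inord i)).
Proof. by rewrite /csum big_mkord; apply: eq_bigr => i _; rewrite inord_val. Qed.

End Lincomb.

Lemma proj_set_id {n} (S : Vec n -> Prop) y : S y -> proj_set S y = y.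
Proof.
move=> hy.
have hyy : nearest S y y by split => // z _; rewrite vsubv norm2_0; apply: norm2_ge0.
have [_ h] := epsilon_spec (inhabits y) (nearest S y) (ex_intro _ y hyy).
have := h y hy; rewrite vsubv norm2_0 -/(proj_set S y) => h0.
have hz : vsub y (proj_set S y) = vzero.
  by apply: norm2_eq0; have := norm2_ge0 (vsub y (proj_set S y)); lra.
apply: functional_extensionality => j; have := f_equal (fun v => v j) hz.
by cbv [vsub vzero] => hj; lra.
Qed.

Section ExtrapolationStep.
Context {n p : nat}.
Variables (Sig U : Vec n -> Prop) (f : Vec n -> Vec p) (g : Vec n -> Vec n) (xs : Vec n).
Variables (Jf : Mat p n) (Jg PT : Mat n n) (K Lf Lfg L L' M : R).
Hypotheses (hK : 0 <= K <= 1) (hLf : 0 <= Lf) (hLfg : 0 <= Lfg).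
Hypotheses (hL : 0 <= L) (hL' : 0 <= L') (hM : 0 <= M).
Hypothesis f_contract : forall x, U x -> Sig x -> norm2 (f (g x)) <= K * norm2 (f x).
Hypothesis f_lip : forall x y, U x -> U y ->
  norm2 (vsub (f x) (f y)) <= Lf * norm2 (vsub x y).
Hypothesis fg_lip : forall x y, U x -> U y ->
  norm2 (vsub (f (g x)) (f (g y))) <= Lfg * norm2 (vsub x y).
Hypothesis f_taylor : forall x, U x ->
  norm2 (vsub (f x) (mapply Jf (vsub x xs))) <= L / 2 * norm2 (vsub x xs) ^ 2.
Hypothesis g_taylor : forall x, U x ->
  norm2 (vsub (vsub (g x) xs) (mapply Jg (vsub x xs))) <= L' / 2 * norm2 (vsub x xs) ^ 2.
Hypothesis proj_in : forall x, U x -> Sig (proj_set Sig x) /\ U (proj_set Sig x).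
Hypothesis proj_taylor : forall x, U x ->
  norm2 (vsub (proj_set Sig x) (vadd xs (mapply PT (vsub x xs)))) <= M / 2 * norm2 (vsub x xs) ^ 2.

Variables (k m : nat) (x : nat -> Vec n) (c : 'I_m.+1 -> R) (dm : R).
Hypothesis hc : \big[Rplus/0]_(i < m.+1) c i = 1.
Hypothesis hxU : forall i : 'I_m.+1, U (x (k - m + i)%N).
Hypothesis hxSig : forall i : 'I_m.+1, Sig (x (k - m + i)%N).
Hypothesis hxdm : forall i : 'I_m.+1, norm2 (vsub (x (k - m + i)%N) xs) <= dm.
Local Notation xt := (lincomb k c x).
Local Notation xa := (lincomb k c (fun j => g (x j))).
Local Notation rt := (lincomb k c (fun j => f (x j))).
Hypothesis hxt : U xt.

Let S := \big[Rplus/0]_(i < m.+1) Rabs (c i).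
Let Q := (S * dm) ^ 2 + S * dm ^ 2.

Lemma lincomb_taylor_err q (F : Vec n -> Vec q) (A : Mat q n) e : 0 <= e ->
  (forall y, U y -> norm2 (vsub (F y) (mapply A (vsub y xs))) <= e * norm2 (vsub y xs) ^ 2) ->
  norm2 (vsub (F xt) (lincomb k c (fun j => F (x j)))) <= e * Q.
Proof.
move=> he hF.
have hS : 0 <= S by apply: big_ge0 => i _; apply: Rabs_pos.
have hdm : 0 <= dm by apply: Rle_trans (norm2_ge0 _) (hxdm ord0).
have hdist : norm2 (vsub xt xs) <= S * dm.
  rewrite (_ : vsub xt xs = lincomb k c (fun j => vsub (x j) xs)).
    exact: norm2_lincomb_le.
  by rewrite lincomb_sub lincomb_const.
have -> : vsub (F xt) (lincomb k c (fun j => F (x j))) =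
    vsub (vsub (F xt) (mapply A (vsub xt xs)))
         (lincomb k c (fun j => vsub (F (x j)) (mapply A (vsub (x j) xs)))).
  rewrite lincomb_sub -lincomb_mapply lincomb_sub lincomb_const //; vext.
apply: Rle_trans (norm2_sub_le _ _) _; rewrite /Q Rmult_plus_distr_l.
apply: Rplus_le_compat.
  apply: Rle_trans (hF _ hxt) _; apply: Rmult_le_compat_l => //.
  by apply: pow_incr; split; [apply: norm2_ge0 | exact: hdist].
rewrite (_ : e * (S * dm ^ 2) = S * (e * dm ^ 2)); last ring.
apply: norm2_lincomb_le => i.
apply: Rle_trans (hF _ (hxU i)) _; apply: Rmult_le_compat_l => //.
by apply: pow_incr; split; [apply: norm2_ge0 | exact: hxdm].
Qed.

Lemma g_lincomb_err :
  norm2 (vsub (g xt) xa) <= L' / 2 * Q.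
Proof.
have := lincomb_taylor_err (F := fun y => vsub (g y) xs) (e := L' / 2) (ltac:(lra)) g_taylor.
by rewrite lincomb_sub lincomb_const // vsubBB.
Qed.

Lemma proj_lincomb_err :
  norm2 (vsub (proj_set Sig xt) xt) <= M / 2 * Q.
Proof.
have hT y : U y -> norm2 (vsub (vsub (proj_set Sig y) xs) (mapply PT (vsub y xs)))
                  <= M / 2 * norm2 (vsub y xs) ^ 2.
  move=> hy.
  by rewrite (_ : vsub (vsub _ xs) _ = vsub (proj_set Sig y) (vadd xs (mapply PT (vsub y xs))));
    [exact: proj_taylor | vext].
have := lincomb_taylor_err (F := fun y => vsub (proj_set Sig y) xs) (e := M / 2) (ltac:(lra)) hT.
rewrite (@eq_lincomb _ _ k c (fun j => vsub (proj_set Sig (x j)) xs) (fun j => vsub (x j) xs));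
  last by move=> i; rewrite /= proj_set_id.
by rewrite !lincomb_sub lincomb_const // vsubBB.
Qed.

(* The contraction applies at the projection of the combination onto Sig, which is
   quadratically close to it. *)
Lemma extrapolation_P_bound :
  norm2 (f (g xt)) <= K * norm2 rt + (L / 2 + Lf * (M / 2) + Lfg * (M / 2)) * Q.
Proof.
have [hSy hUy] := proj_in hxt; set y := proj_set Sig xt in hSy hUy.
have hQ : 0 <= Q.
  have hS : 0 <= S by apply: big_ge0 => i _; apply: Rabs_pos.
  by rewrite /Q; have := pow2_ge_0 (S * dm); have := pow2_ge_0 dm; nra.
have hy := proj_lincomb_err; rewrite -/y in hy.
have hfxt : norm2 (f xt) <= norm2 rt + L / 2 * Q.
  have := norm2_le_add_sub (f xt) rt.
  by have := lincomb_taylor_err (e := L / 2) (ltac:(lra)) f_taylor; lra.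
have hfy : norm2 (f y) <= norm2 (f xt) + Lf * (M / 2 * Q).
  have := norm2_le_add_sub (f y) (f xt); have := f_lip hUy hxt.
  by have := Rmult_le_compat_l _ _ _ hLf hy; lra.
have hfgxt : norm2 (f (g xt)) <= norm2 (f (g y)) + Lfg * (M / 2 * Q).
  have := norm2_le_add_sub (f (g xt)) (f (g y)); have := fg_lip hxt hUy.
  by rewrite (norm2_vsubC xt); have := Rmult_le_compat_l _ _ _ hLfg hy; lra.
have := f_contract hUy hSy.
have : K * norm2 (f y) <= K * (norm2 rt + L / 2 * Q + Lf * (M / 2 * Q)).
  by apply: Rmult_le_compat_l; lra.
have : K * ((L / 2 + Lf * (M / 2)) * Q) <= (L / 2 + Lf * (M / 2)) * Q.
  have : 0 <= (L / 2 + Lf * (M / 2)) * Q by apply: Rmult_le_pos => //; nra.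
  nra.
lra.
Qed.

Lemma extrapolation_A_bound : U (g xt) -> U xa ->
  norm2 (f xa) <= K * norm2 rt +
  (L / 2 + Lf * (M / 2) + Lfg * (M / 2) + Lf * (L' / 2)) * Q.
Proof.
move=> hgxt hxa.
have := norm2_le_add_sub (f xa) (f (g xt)).
have := f_lip hxa hgxt; rewrite (norm2_vsubC xa (g xt)).
have := Rmult_le_compat_l _ _ _ hLf g_lincomb_err.
have := extrapolation_P_bound; lra.
Qed.

End ExtrapolationStep.

Lemma separated_min_coef {p} (r : nat -> Vec p) k m t : 0 < t ->
  (forall i, (i <= m)%N -> r (k - m + i)%N <> vzero) ->
  (forall i, (1 <= i <= m)%N ->
     dist2 (r (k - m + i)%N) (affspan r k m i.-1)
       >= t * \big[Rmax/0]_(i <= j < m.+1) norm2 (r (k - m + j)%N)) ->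
  let D := dist2 vzero (affspan r k m m) in
  [/\ aff_indep r k m, (m <= p)%N,
      exists! c : 'I_m.+1 -> R, \big[Rplus/0]_(i < m.+1) c i = 1 /\ norm2 (lincomb k c r) = D
    & forall c : 'I_m.+1 -> R,
      \big[Rplus/0]_(i < m.+1) c i = 1 -> norm2 (lincomb k c r) = D ->
      forall i, Rabs (c i) <= coef_const m * (1 + / t ^ m)].
Proof.
move=> ht Hnz Hd D.
set s := fun i => r (k - m + i)%N.
have hD : D = dist2 vzero (aff s m) by [].
have hmin c : \big[Rplus/0]_(i < m.+1) c i = 1 -> norm2 (lincomb k c r) = D ->
    forall i : 'I_m.+1, c i = proj_coef s m vzero i.
  move=> hc hcD i; rewrite sum_csum in hc; rewrite lincomb_comb hD in hcD.
  by have := min_coef_unique ht Hnz Hd hc hcD (ltn_ord i : (i <= m)%N); rewrite inord_val.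
split.
- move=> c hc hcomb i.
  rewrite sum_csum in hc; rewrite lincomb_comb in hcomb.
  by have := comb_indep ht Hnz Hd (leqnn m) hc hcomb (ltn_ord i : (i <= m)%N); rewrite inord_val.
- exact: m_le_dim ht Hnz Hd.
- exists (fun i : 'I_m.+1 => proj_coef s m vzero i); split.
    split.
      by rewrite sum_csum -(csum_proj_coef s m vzero); apply: eq_csum => i hi; rewrite inordK.
    rewrite lincomb_comb hD (dist2_aff_zero ht Hnz Hd).
    by congr norm2; apply: eq_comb => i hi; rewrite inordK.
  by move=> c' [h1 h2]; apply: functional_extensionality => i; rewrite (hmin c' h1 h2).
- by move=> c hc hcD i; rewrite (hmin c hc hcD); apply: min_coef_bound.
Qed.

Lemma sharp_f_neq0 {n p} (f : Vec n -> Vec p) x xs sigma :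
  0 < sigma -> sigma * norm2 (vsub x xs) <= norm2 (f x) -> x <> xs -> f x <> vzero.
Proof.
move=> hsig h hne hf0; rewrite hf0 norm2_0 in h.
have : 0 < norm2 (vsub x xs).
  apply: norm2_gt0 => hz; apply: hne; apply: functional_extensionality => j.
  by have := f_equal (fun v => v j) hz; cbv [vsub vzero] => hj; lra.
nra.
Qed.

Lemma le_sqrt_div a b sigma M : 0 < sigma -> 0 <= b -> sigma * a <= b -> b ^ 2 <= M ->
  a <= sqrt M / sigma.
Proof.
move=> hsig hb h hM.
have : b <= sqrt M by rewrite -(sqrt_pow2 b hb); apply: sqrt_le_1_alt.
move=> hbM; apply: (Rmult_le_reg_l sigma) => //.
by rewrite (_ : sigma * (sqrt M / sigma) = sqrt M); [lra | field; lra].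
Qed.

Lemma err_scale_le S dm u C N : 1 <= S -> 0 <= u -> 0 <= C -> 0 <= N ->
  S <= N * (C * (1 + u)) ->
  (S * dm) ^ 2 + S * dm ^ 2 <= 4 * N ^ 2 * C ^ 2 * (1 + u ^ 2) * dm ^ 2.
Proof.
move=> hS hu hC hN hSb.
have hd2 := pow2_ge_0 dm.
have hQ : (S * dm) ^ 2 + S * dm ^ 2 <= 2 * S ^ 2 * dm ^ 2 by nra.
have hS2 : S ^ 2 <= N ^ 2 * C ^ 2 * (1 + u) ^ 2.
  rewrite -!Rpow_mult_distr; apply: pow_incr; lra.
have h1u : (1 + u) ^ 2 <= 2 * (1 + u ^ 2) by have := pow2_ge_0 (u - 1); nra.
have := pow2_ge_0 N; have := pow2_ge_0 C.
have : 0 <= N ^ 2 * C ^ 2 by apply: Rmult_le_pos; apply: pow2_ge_0.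
nra.
Qed.

Lemma quad_err_ge0 S dm : 0 <= S -> 0 <= (S * dm) ^ 2 + S * dm ^ 2.
Proof.
by move=> hS; have := pow2_ge_0 (S * dm); have := Rmult_le_pos _ _ hS (pow2_ge_0 dm); lra.
Qed.

(* The constant kappa; [m <= p] makes it independent of [m]. *)
Definition step_const (K0 sigma : R) (p : nat) : R :=
  (K0 + 1) * (4 * (INR p + 1) ^ 2 * coef_const p ^ 2 / sigma ^ 2).

Lemma step_const_gt0 K0 sigma p : 0 <= K0 -> 0 < sigma -> 0 < step_const K0 sigma p.
Proof.
move=> hK0 hsig; apply: Rmult_lt_0_compat; [lra | apply: Rdiv_lt_0_compat; last exact: pow_lt].
have := pow_lt _ 2 (coef_const_gt0 p).
by have := pos_INR p; have := pow2_ge_0 (INR p); nra.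
Qed.

Lemma quad_err_le K0 sigma maxsq t S m p :
  0 <= K0 -> 0 < sigma -> 0 <= maxsq -> 0 < t -> (m <= p)%N -> 1 <= S ->
  S <= (INR m + 1) * (coef_const m * (1 + / t ^ m)) ->
  let dm := sqrt maxsq / sigma in
  K0 * ((S * dm) ^ 2 + S * dm ^ 2) <= step_const K0 sigma p * (1 + / t ^ (2 * m)) * maxsq.
Proof.
move=> hK0 hsig hmax ht hmp hS1 hSm dm.
have hu : 0 <= / t ^ m by apply: Rlt_le; apply: Rinv_0_lt_compat; apply: pow_lt.
have hC := coef_const_gt0 p.
have hSb : S <= (INR p + 1) * (coef_const p * (1 + / t ^ m)).
  apply: Rle_trans hSm _; apply: Rmult_le_compat.
  - by have := pos_INR m; lra.
  - by have := coef_const_gt0 m; nra.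
  - by have := le_INR _ _ (elimT leP hmp); lra.
  - by apply: Rmult_le_compat_r; [lra | exact: coef_const_le].
have hN : 0 <= INR p + 1 by have := pos_INR p; lra.
have := err_scale_le dm hS1 hu (Rlt_le _ _ hC) hN hSb.
rewrite (_ : (/ t ^ m) ^ 2 = / t ^ (2 * m)); last by rewrite mulnC pow_mult pow_inv.
set E := 4 * _ * _ * _ * dm ^ 2 => hQE.
have hE : 0 <= E by have := quad_err_ge0 dm (ltac:(lra) : 0 <= S); lra.
have -> : step_const K0 sigma p * (1 + / t ^ (2 * m)) * maxsq = (K0 + 1) * E.
  rewrite /E /dm /step_const /Rdiv Rpow_mult_distr pow2_sqrt //.
  by rewrite pow_inv; ring.
by apply: Rle_trans (Rmult_le_compat_l _ _ _ hK0 hQE) _; lra.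
Qed.

Lemma residual_le K a D d e B : 0 <= K -> a <= K * D + e -> e <= B -> D <= a + d ->
  a <= K * D + B /\ (1 - K) * a <= K * d + B.
Proof. by move=> hK h1 h2 h3; have := Rmult_le_compat_l _ _ _ hK h3; split; lra. Qed.

Lemma dist2_affspan_le {p} (r : nat -> Vec p) k m t : 0 < t ->
  (forall i, (i <= m)%N -> r (k - m + i)%N <> vzero) ->
  (forall i, (1 <= i <= m)%N ->
     dist2 (r (k - m + i)%N) (affspan r k m i.-1)
       >= t * \big[Rmax/0]_(i <= j < m.+1) norm2 (r (k - m + j)%N)) ->
  forall v, dist2 vzero (affspan r k m m) <= norm2 v + dist2 v (affspan r k m m).
Proof.
move=> ht Hnz Hd v.
have := dist2_aff_le (proj_orth_le ht Hnz Hd (leqnn m) vzero) (proj_orth_le ht Hnz Hd (leqnn m) v).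
by rewrite norm2_vsubC vsub0.
Qed.

Theorem lemma3p1 :
  exists C : nat -> R, (forall m, 0 < C m) /\
  forall (n p : nat) (Sig : Vec n -> Prop) (V : Vec n -> Prop)
         (f : Vec n -> Vec p) (g : Vec n -> Vec n) (xs : Vec n),
    (1 <= n)%nat -> (1 <= p)%nat ->
    submanifold Sig -> is_open V ->
    CkV 2 V f -> CkV 2 V g -> (forall x, V x -> Sig (g x)) ->
    V xs -> Sig xs -> g xs = xs -> f xs = vzero ->
  forall (K sigma : R),
    0 < K < 1 ->
    (forall x, V x -> V (g x) -> Sig x -> norm2 (f (g x)) <= K * norm2 (f x)) ->
    0 < sigma ->
    (forall x, V x -> Sig x -> sigma * norm2 (vsub x xs) <= norm2 (f x)) ->
  forall (U : Vec n -> Prop) (L L' M : R) (PT : Mat n n),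
    is_open U -> U xs -> (forall x, U x -> V x /\ V (g x)) ->
    (* (i) *)
    (forall x y, U x -> U y ->
       norm2 (vsub (f x) (f y)) <= 2 * frob (jac f xs) * norm2 (vsub x y)) ->
    (forall x y, U x -> U y ->
       norm2 (vsub (f (g x)) (f (g y)))
         <= 2 * frob (mmul (jac f xs) (jac g xs)) * norm2 (vsub x y)) ->
    (* (ii) *)
    0 < L -> 0 < L' ->
    (forall x, U x ->
       norm2 (vsub (f x) (mapply (jac f xs) (vsub x xs)))
         <= L / 2 * norm2 (vsub x xs) ^ 2) ->
    (forall x, U x ->
       norm2 (vsub (vsub (g x) xs) (mapply (jac g xs) (vsub x xs)))
         <= L' / 2 * norm2 (vsub x xs) ^ 2) ->
    (* (iii) *)
    (forall x, U x -> exists! y, nearest Sig x y) ->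
    smooth_on U (proj_set Sig) ->
    (forall x, U x -> Sig (proj_set Sig x) /\ U (proj_set Sig x)) ->
    orth_projector_onto PT (tangent Sig xs) ->
    0 < M ->
    (forall x, U x ->
       norm2 (vsub (proj_set Sig x) (vadd xs (mapply PT (vsub x xs))))
         <= M / 2 * norm2 (vsub x xs) ^ 2) ->
  exists kappa : R, 0 < kappa /\
  forall (t : R) (k m : nat) (x : nat -> Vec n),
    (1 <= m)%nat -> (m <= k)%nat -> 0 < t ->
    (forall i, (i <= m)%nat ->
       U (x (k - m + i)%nat) /\ Sig (x (k - m + i)%nat) /\ x (k - m + i)%nat <> xs) ->
    let r := fun j => f (x j) in
    (forall i, (1 <= i <= m)%nat ->
       dist2 (r (k - m + i)%nat) (affspan r k m i.-1)
         >= t * \big[Rmax/0]_(i <= j < m.+1) norm2 (r (k - m + j)%nat)) ->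
    let D := dist2 vzero (affspan r k m m) in
    let maxsq := \big[Rmax/0]_(0 <= i < m.+1) (norm2 (r (k - m + i)%nat) ^ 2) in
    aff_indep r k m /\ (m <= p)%nat /\
    (exists! c : 'I_m.+1 -> R,
        \big[Rplus/0]_(i < m.+1) c i = 1 /\ norm2 (lincomb k c r) = D) /\
    forall c : 'I_m.+1 -> R,
      \big[Rplus/0]_(i < m.+1) c i = 1 -> norm2 (lincomb k c r) = D ->
      (forall i, Rabs (c i) <= C m * (1 + / t ^ m)) /\
      let xt := lincomb k c x in
      let xa := lincomb k c (fun j => g (x j)) in
      U xt -> U (g xt) -> U xa ->
      (* version P *)
      (let x1 := g xt in
       norm2 (f x1) <= K * D + kappa * (1 + / t ^ (2 * m)) * maxsq /\
       (1 - K) * norm2 (f x1)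
         <= K * dist2 (f x1) (affspan r k m m) + kappa * (1 + / t ^ (2 * m)) * maxsq) /\
      (* version A, when Sigma = R^n *)
      ((forall y, Sig y) ->
       let x1 := xa in
       norm2 (f x1) <= K * D + kappa * (1 + / t ^ (2 * m)) * maxsq /\
       (1 - K) * norm2 (f x1)
         <= K * dist2 (f x1) (affspan r k m m) + kappa * (1 + / t ^ (2 * m)) * maxsq).
Proof.
(* Smoothness enters only through its quantitative consequences (i)-(iii). *)
exists coef_const; split => [|n p Sig V f g xs _ _ _ _ _ _ _ _ _ _ _ K sigma hK hcontr hsig hsharp
  U L L' M PT _ _ hUV hfL hfgL hL hL' hfT hgT _ _ hproj _ hM hPT]; first exact: coef_const_gt0.
have hKc : 0 <= K <= 1 by lra.
have hcontrU y : U y -> Sig y -> norm2 (f (g y)) <= K * norm2 (f y).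
  by move=> hy; have [] := hUV y hy; apply: hcontr.
set Lf := 2 * frob (jac f xs); set Lfg := 2 * frob (mmul (jac f xs) (jac g xs)).
have hLf : 0 <= Lf by apply: Rmult_le_pos; [lra | apply: sqrt_pos].
have hLfg : 0 <= Lfg by apply: Rmult_le_pos; [lra | apply: sqrt_pos].
set K1 := L / 2 + Lf * (M / 2) + Lfg * (M / 2).
set K0 := K1 + Lf * (L' / 2).
have hK1 : 0 <= K1 by rewrite /K1; nra.
have hK10 : K1 <= K0 by rewrite /K0; nra.
have hK0 : 0 <= K0 by lra.
exists (step_const K0 sigma p); split => [|t k m x hm1 hmk ht hx r Hd D maxsq].
  exact: step_const_gt0 hK0 hsig.
have hxU (i : 'I_m.+1) : U (x (k - m + i)%N) by case: (hx i (ltn_ord i)).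
have hxS (i : 'I_m.+1) : Sig (x (k - m + i)%N) by case: (hx i (ltn_ord i)) => _ [].
have hr0 i : (i <= m)%N -> r (k - m + i)%N <> vzero.
  move=> hi; have [hU [hS hne]] := hx i hi.
  exact: sharp_f_neq0 hsig (hsharp _ (proj1 (hUV _ hU)) hS) hne.
have [hind hmp hex hcb] := separated_min_coef ht hr0 Hd.
split => //; split => //; split => // c hc hcD.
split => [|xt xa hxt hgxt hxa]; first exact: hcb.
have hdm (i : 'I_m.+1) : norm2 (vsub (x (k - m + i)%N) xs) <= sqrt maxsq / sigma.
  apply: le_sqrt_div hsig (norm2_ge0 _) (hsharp _ (proj1 (hUV _ (hxU i))) (hxS i)) _.
  by apply: (@bigmax_ge _ _ (fun i => norm2 (r (k - m + i)%N) ^ 2)); rewrite mem_index_iota ltn_ord.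
have hS1 := sum_abs_ge1 hc.
have hQ := quad_err_le (maxsq := maxsq) hK0 hsig (bigmax_ge0 _ _) ht hmp hS1
  (sum_abs_le (hcb c hc hcD)).
cbv zeta in hQ.
set S := \big[Rplus/0]_(i < m.+1) Rabs (c i) in hS1 hQ.
set Q := (S * _) ^ 2 + S * _ in hQ.
have hQ0 : 0 <= Q := quad_err_ge0 _ (Rle_trans _ _ _ Rle_0_1 hS1).
have hD := dist2_affspan_le ht hr0 Hd.
have hP := extrapolation_P_bound hKc hLf hLfg (Rlt_le _ _ hL) (Rlt_le _ _ hM)
  hcontrU hfL hfgL hfT hproj hPT hc hxU hxS hdm hxt.
have hA := extrapolation_A_bound hKc hLf hLfg (Rlt_le _ _ hL) (Rlt_le _ _ hL') (Rlt_le _ _ hM)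
  hcontrU hfL hfgL hfT hgT hproj hPT hc hxU hxS hdm hxt hgxt hxa.
rewrite -/S -/Q -/K1 -/K0 -/xt -/xa hcD in hP hA.
(* Version A does not need [Sigma = R^n]. *)
split => [|_]; apply: residual_le hKc.1 _ _ (hD _).
- exact: hP.
- exact: Rle_trans (Rmult_le_compat_r _ _ _ hQ0 hK10) hQ.
- exact: hA.
- exact: hQ.
Qed.
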